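(* Consider the parallel multiple access channel power allocation game with $K\ge 1$ users and $A\ge 1$ nodes, as described in the context, with random channel gains $g_{k\alpha}$. Let $p\in\Delta$ be a Nash equilibrium of the game, and let $\mathcal{G}$ be any multigraph that represents $p$. Then, almost surely (with respect to the law of the channel gains), $\mathcal{G}$ is a forest, i.e. it contains no cycles (where two distinct edges joining the same pair of nodes also count as a cycle).
   Context: Setting: users $\mathcal{K}=\{1,\dots,K\}$, nodes $\mathcal{A}=\{1,\dots,A\}$. User $k$ has maximum power $P_k>0$ and strategy set $\Delta_k=\{p_k\in\mathbb{R}^{\mathcal{A}}: p_{k\alpha}\ge 0,\ \sum_\alpha p_{k\alpha}=P_k\}$; the profile space is $\Delta=\prod_k\Delta_k$. Payoffs are $u_k(p)=\sum_{\alpha\in\mathcal{A}} b_\alpha\log\bigl(1+\frac{g_{k\alpha}p_{k\alpha}}{\sigma_\alpha^2+\sum_{\ell\neq k}g_{\ell\alpha}p_{\ell\alpha}}\bigr)$, with constants $b_\alpha>0$, $\sigma_\alpha^2>0$, and channel gains $g_{k\alpha}>0$ which are random, drawn from a continuous (nonatomic) probability distribution on the positive reals; all probabilistic statements refer to the law of the $g_{k\alpha}$. A profile $q\in\Delta$ is a Nash equilibrium if $u_k(q)\ge u_k(q_{-k};q_k')$ for all $k$ and all $q_k'\in\Delta_k$. The support of $p_k$ is $\mathrm{supp}(p_k)=\{\alpha: p_{k\alpha}>0\}$. A multigraph $\mathcal{G}=(\mathcal{V},\mathcal{E})$ represents $p\in\Delta$ if $\mathcal{V}=\mathcal{A}$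 and, for each user $k$, there is a node $\alpha\in\mathrm{supp}(p_k)$ (the hub of $k$) which is joined by an edge (owned by user $k$) to every other node $\beta\in\mathrm{supp}(p_k)\setminus\{\alpha\}$, and $\mathcal{E}$ consists exactly of these edges over all users. *)

From HB Require Import structures.
From mathcomp Require Import all_boot all_order all_algebra.
From mathcomp Require Import all_classical all_reals all_analysis.
Set Implicit Arguments. Unset Strict Implicit. Unset Printing Implicit Defensive.
Import Order.TTheory GRing.Theory Num.Theory.
Local Open Scope ring_scope.

Section Game.
Variables (R : realType) (K A : nat).
(* b : bandwidths b_alpha, s2 : noise variances sigma_alpha^2,
   Pmax : maximum powers P_k, g : channel gains g_{k alpha} *)
Variables (b s2 : 'I_A -> R) (Pmax : 'I_K -> R) (g : 'I_K -> 'I_A -> R).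

Definition profile := 'I_K -> 'I_A -> R.

Definition in_Delta_k (k : 'I_K) (pk : 'I_A -> R) : Prop :=
  (forall a, 0 <= pk a) /\ \sum_(a < A) pk a = Pmax k.

Definition in_Delta (p : profile) : Prop := forall k, in_Delta_k k (p k).

Definition payoff (k : 'I_K) (p : profile) : R :=
  \sum_(a < A) b a * ln (1 + g k a * p k a /
        (s2 a + \sum_(l < K | l != k) g l a * p l a)).

Definition deviate (p : profile) (k : 'I_K) (qk : 'I_A -> R) : profile :=
  fun l => if l == k then qk else p l.

Definition Nash_equilibrium (q : profile) : Prop :=
  in_Delta q /\
  forall k (qk : 'I_A -> R), in_Delta_k k qk -> payoff k (deviate q k qk) <= payoff k q.

End Game.

Definition supp (R : realType) (A : nat) (pk : 'I_A -> R) : pred 'I_A :=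
  fun a => 0 < pk a.

(* The multigraph on the node set 'I_A representing p with hub function h
   (h k = hub of user k, required to lie in supp p_k).  Its edges are indexed
   by pairs (k, beta) with beta in supp p_k, beta <> h k; edge (k, beta) is
   owned by user k and joins h k and beta. *)
Definition repr_edge (R : realType) (K A : nat) (p : 'I_K -> 'I_A -> R)
  (h : 'I_K -> 'I_A) (e : 'I_K * 'I_A) : bool :=
  supp (p e.1) e.2 && (e.2 != h e.1).

Definition repr_joins (K A : nat) (h : 'I_K -> 'I_A) (e : 'I_K * 'I_A)
  (u v : 'I_A) : bool :=
  ((u == h e.1) && (v == e.2)) || ((u == e.2) && (v == h e.1)).

Definition is_hub_choice (R : realType) (K A : nat) (p : 'I_K -> 'I_A -> R)
  (h : 'I_K -> 'I_A) : Prop := forall k, supp (p k) (h k).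

(* A cycle: n+1 pairwise distinct edges e_0..e_n and n+1 pairwise distinct
   vertices v_0..v_n with e_i joining v_i and v_{i+1 mod n+1}.  Two distinct
   parallel edges form a cycle of length 2. *)
Definition has_cycle (R : realType) (K A : nat) (p : 'I_K -> 'I_A -> R)
  (h : 'I_K -> 'I_A) : Prop :=
  exists (n : nat) (es : 'I_n.+1 -> 'I_K * 'I_A) (vs : 'I_n.+1 -> 'I_A),
    injective es /\ injective vs /\
    (forall i, repr_edge p h (es i)) /\
    (forall i, repr_joins h (es i) (vs i) (vs (ordS i))).

Definition is_forest (R : realType) (K A : nat) (p : 'I_K -> 'I_A -> R)
  (h : 'I_K -> 'I_A) : Prop := ~ has_cycle p h.

(* At a Nash equilibrium every user puts power only on nodes of maximal
   marginal utility b_a g_ka / W_a, where W_a is the noise plus the total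
   power received at node a.  An edge of user k joining a and a' therefore
   gives g_ka r_a = g_ka' r_a' with r = b / W, and multiplying these
   equalities around a cycle cancels the r's.  The edges of a single user form
   a star, so the users change somewhere along a cycle, and the product
   identity becomes, after taking logarithms, a nontrivial linear relation
   between independent nonatomic random variables.  Such a relation holds
   with probability zero: locate all variables but one on a fine grid; the
   remaining one must then lie in a short interval, which has uniformly small
   probability.  Finally, there are only finitely many cycle shapes. *)

From HB Require Import structures.
From mathcomp Require Import all_boot all_order all_algebra.
From mathcomp Require Import all_classical all_reals all_analysis.
From mathcomp Require Import measurable_realfun ring lra.
Import Order.TTheory GRing.Theory Num.Theory.
Local Open Scope classical_set_scope.
Local Open Scope ring_scope.

Lemma measure_bigsetU_le {R : realType} {d : measure_display} {T : measurableType d}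
  (mu : {measure set T -> \bar R}) {I : Type} {r : seq I} {P : pred I} {F : I -> set T} :
  (forall i, P i -> measurable (F i)) ->
  (mu (\big[setU/set0]_(i <- r | P i) F i) <= \sum_(i <- r | P i) mu (F i))%E.
Proof.
move=> mF; elim: r => [|x r IH]; first by rewrite !big_nil measure0.
rewrite !big_cons; case: ifP => Px //.
apply: le_trans (measureU2 mu (mF x Px) (bigsetU_measurable _ mF)) _.
exact: leeD.
Qed.

Lemma measurable_norm_gt (R : realType) (M : R) : measurable [set x : R | M < `|x|].
Proof.
have -> : [set x : R | M < `|x|] = ~` [set` `[- M, M]].
  by apply/seteqP; split => x /=; rewrite in_itv /= -ler_norml ltNge => /negP.
by apply: measurableC; exact: measurable_itv.
Qed.

Section SmallProbability.
Context {R : realType} {d : measure_display} {Omega : measurableType d}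
  (Pr : probability Omega R).

Lemma measurable_preimage {Z : Omega -> R} {S : set R} :
  measurable_fun setT Z -> measurable S -> measurable (Z @^-1` S).
Proof. by move=> mZ mS; rewrite -[_ @^-1` _]setTI; exact: mZ. Qed.

Lemma le_probability_preimage {Z : Omega -> R} {S T : set R} :
  measurable_fun setT Z -> measurable S -> measurable T -> S `<=` T ->
  (Pr (Z @^-1` S) <= Pr (Z @^-1` T))%E.
Proof.
move=> mZ mS mT ST; apply: le_measure; rewrite ?inE; try exact: measurable_preimage.
exact: preimage_subset.
Qed.

Lemma probability_fineK {S : set Omega} : measurable S -> Pr S = (fine (Pr S))%:E.
Proof. by move=> mS; rewrite fineK // fin_num_measure. Qed.

Lemma probability_fine_itv {S : set Omega} : measurable S -> 0 <= fine (Pr S) <= 1.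
Proof.
move=> mS; rewrite fine_ge0 ?measure_ge0 //=.
by rewrite -lee_fin -probability_fineK // probability_le1.
Qed.

Lemma probability_trivIset_sum_le1 {n} (F : 'I_n -> set Omega) :
  (forall t, measurable (F t)) -> trivIset setT F -> \sum_t fine (Pr (F t)) <= 1.
Proof.
move=> mF triF; rewrite -lee_fin -sumEFin.
under eq_bigr do rewrite fineK ?fin_num_measure ?mF //.
have <- : Pr (\big[setU/set0]_(t < n) F t) = (\sum_(t < n) Pr (F t))%E :=
  measure_bigsetU_ord Pr predT mF triF.
exact/probability_le1/bigsetU_measurable.
Qed.

Lemma probability_eq0_of_small {E : set Omega} (N : R) : 0 < N ->
  (forall eps, 0 < eps -> (Pr E <= (N * eps)%:E)%E) -> Pr E = 0%E.
Proof.
move=> N0 small; apply/eqP; rewrite -measure_le0; apply/lee_addgt0Pr => e e0.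
by have := small (e / N) (divr_gt0 e0 N0); rewrite add0e mulrC divfK ?gt_eqF.
Qed.

Lemma probability_small_of_bigcap0 {F : nat -> set Omega} {eps : R} : 0 < eps ->
  (forall n, measurable (F n)) -> (forall n, F n.+1 `<=` F n) ->
  Pr (\bigcap_n F n) = 0%E -> exists n, (Pr (F n) <= eps%:E)%E.
Proof.
move=> e0 mF decF P0.
have ni : nonincreasing_seq F by apply/nonincreasing_seqP => n; exact/subsetPset/decF.
have Pr_fin n : Pr (F n) \is a fin_num by exact: fin_num_measure.
have Pr_lty : (Pr (F 0%N) < +oo)%E by rewrite ltey_eq Pr_fin.
have := nonincreasing_cvg_mu Pr_lty mF (bigcapT_measurable mF) ni.
have -> : (Pr : {measure set Omega -> \bar R}) (\bigcap_n F n) = 0%E := P0.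
move=> /fine_cvgP [_ /cvgr_lt /(_ _ e0) [N _ HN]]; exists N.
by rewrite -(fineK (Pr_fin N)) lee_fin ltW // (HN N (leqnn N)).
Qed.

Lemma probability_norm_gt_small {Z : Omega -> R} {eps : R} :
  measurable_fun setT Z -> 0 < eps ->
  exists M : R, 0 <= M /\ (Pr (Z @^-1` [set x | (M < `|x|)%R]) <= eps%:E)%E.
Proof.
move=> mZ e0.
pose F n := Z @^-1` [set x : R | n%:R < `|x|].
have mF n : measurable (F n) by apply: measurable_preimage mZ _; exact: measurable_norm_gt.
have decF n : F n.+1 `<=` F n by move=> w /=; apply: le_lt_trans; rewrite ler_nat.
have P0 : Pr (\bigcap_n F n) = 0%E.
  suff -> : \bigcap_n F n = set0 by exact: measure0.
  apply/seteqP; split => // w /(_ (Num.trunc `|Z w|).+1 I) /=.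
  by rewrite /F /= ltNge (ltW (truncnS_gt _)).
have [n Hn] := probability_small_of_bigcap0 e0 mF decF P0.
by exists n%:R.
Qed.

Lemma probability_near_null_point_small {Z : Omega -> R} {s eps : R} :
  measurable_fun setT Z -> 0 < eps -> Pr (Z @^-1` [set s]) = 0%E ->
  exists2 rho : R, 0 < rho & (Pr (Z @^-1` `[(s - rho)%R, (s + rho)%R]) <= eps%:E)%E.
Proof.
move=> mZ e0 Ps.
pose r n : R := n.+1%:R^-1.
have r0 n : 0 < r n by rewrite invr_gt0.
pose F n := Z @^-1` `[s - r n, s + r n].
have mF n : measurable (F n) by apply: measurable_preimage mZ _; exact: measurable_itv.
have decF n : F n.+1 `<=` F n.
  have rS : r n.+1 <= r n by rewrite lef_pV2 ?posrE ?ltr0n // ler_nat.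
  by apply: preimage_subset; apply: subset_itvScc; rewrite bnd_simp; lra.
have P0 : Pr (\bigcap_n F n) = 0%E.
  rewrite -Ps; congr (Pr _); apply/seteqP; split => w /=; last first.
    move=> hw n _; rewrite /F /= hw in_itv /=.
    by have rn := r0 n; apply/andP; split; lra.
  move=> H; apply/eqP; rewrite -subr_eq0 -normr_eq0; apply: contraT => hne.
  have hp : 0 < `|Z w - s| by rewrite lt_def hne normr_ge0.
  have := H (Num.trunc `|Z w - s|^-1) I; rewrite /F /= in_itv /= -ler_distl.
  have := truncnS_gt `|Z w - s|^-1.
  rewrite -ltf_pV2 ?posrE ?invr_gt0 ?ltr0n // invrK => lt_r.
  by rewrite /r leNgt lt_r.
have [n Hn] := probability_small_of_bigcap0 e0 mF decF P0.
by exists (r n).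
Qed.

Definition small_intervals_upto (Z : Omega -> R) (eps lo x : R) :=
  exists2 eta : R, 0 < eta & forall u, lo <= u <= x ->
    (Pr (Z @^-1` `[u, (u + eta)%R]) <= eps%:E)%E.

(* The supremum of the [x] up to which short intervals are uniformly small
   cannot be below [hi]: a small neighbourhood of it, given by
   [probability_near_null_point_small], extends the uniformity past it. *)
Lemma probability_short_intervals_small (Z : Omega -> R) (eps lo hi : R) :
  measurable_fun setT Z -> 0 < eps -> (forall s, Pr (Z @^-1` [set s]) = 0%E) ->
  small_intervals_upto Z eps lo hi.
Proof.
move=> mZ e0 Znull.
have [hilo|lohi] := ltP hi lo.
  by exists 1 => // u /andP [h1 h2]; have := le_trans h1 h2; rewrite leNgt hilo.
pose S := [set x | x <= hi /\ small_intervals_upto Z eps lo x].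
have Slo : S lo.
  split => //; have [rho rho0 Hr] := probability_near_null_point_small mZ e0 (Znull lo).
  exists rho => // u /andP [h1 h2]; have -> : u = lo by apply/le_anti; rewrite h1 h2.
  apply: le_trans Hr.
  apply: le_probability_preimage mZ (measurable_itv _) (measurable_itv _) _.
  by apply: subset_itvScc; rewrite bnd_simp; lra.
have supS : has_sup S by split; [exists lo | exists hi => x []].
set s := sup S.
have [rho rho0 Hr] := probability_near_null_point_small mZ e0 (Znull s).
have rho2 : 0 < rho / 2 by rewrite divr_gt0.
have [x [xhi [dx dx0 Hx]] xs] := sup_adherent rho2 supS; rewrite -/s in xs.
have Cs : small_intervals_upto Z eps lo (s + rho / 2).
  exists (Num.min dx (rho / 2)); first by rewrite lt_min dx0 rho2.
  have hdx : Num.min dx (rho / 2) <= dx by rewrite ge_min lexx.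
  have hrho : Num.min dx (rho / 2) <= rho / 2 by rewrite ge_min lexx orbT.
  have rho_half : rho / 2 + rho / 2 = rho by field.
  move=> u /andP [h1 h2].
  have [ux|xu] := leP u x.
    apply: le_trans (Hx u _); last by rewrite h1 ux.
    apply: le_probability_preimage mZ (measurable_itv _) (measurable_itv _) _.
    by apply: subset_itvScc; rewrite bnd_simp; lra.
  apply: le_trans Hr.
  apply: le_probability_preimage mZ (measurable_itv _) (measurable_itv _) _.
  by apply: subset_itvScc; rewrite bnd_simp; lra.
have [shi|his] := leP (s + rho / 2) hi.
  have : s + rho / 2 <= s by apply: sup_upper_bound.
  by rewrite gerDl leNgt rho2.
case: Cs => eta eta0 Heta; exists eta => // u /andP [h1 h2]; apply: Heta.
by rewrite h1 (le_trans h2 (ltW his)).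
Qed.

End SmallProbability.

Section Grid.
Context {R : realType} (M del : R).
Hypothesis del_gt0 : 0 < del.

Definition grid_point (t : nat) : R := - M + t%:R * del.

Definition grid_cell (t : nat) : set R := [set` `[grid_point t, grid_point t.+1[].

Definition grid_index (x : R) : nat := Num.trunc ((x + M) / del).

Definition grid_size : nat := (grid_index M).+1.

Lemma grid_cell_trivIset n : trivIset setT (fun t : 'I_n => grid_cell t).
Proof.
move=> t t' _ _ [x []]; rewrite /grid_cell /grid_point /= !in_itv /= -!natr1 !mulrDl !mul1r.
move=> /andP [h1 h2] /andP [h3 h4]; apply: val_inj; apply/eqP; rewrite eqn_leq.
have lt1 : (t : nat)%:R * del < ((t' : nat) + 1)%:R * del by rewrite natrD mulrDl mul1r; lra.
have lt2 : (t' : nat)%:R * del < ((t : nat) + 1)%:R * del by rewrite natrD mulrDl mul1r; lra.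
by rewrite !ltr_pM2r // !ltr_nat !addn1 !ltnS in lt1 lt2; rewrite lt1 lt2.
Qed.

Lemma grid_cell_index x : - M <= x -> grid_cell (grid_index x) x.
Proof.
move=> Mx; have /trunc_itv : 0 <= (x + M) / del by apply: divr_ge0; [lra | exact: ltW].
rewrite -/(grid_index x) ler_pdivlMr // ltr_pdivrMr // => /andP [h1 h2].
by rewrite /grid_cell /= in_itv /= /grid_point; apply/andP; split; lra.
Qed.

Lemma grid_index_lt x : `|x| <= M -> (grid_index x < grid_size)%N.
Proof.
rewrite ler_norml => /andP [h1 h2]; rewrite ltnS /grid_index; apply: le_truncn.
by rewrite ler_pM2r ?invr_gt0 //; lra.
Qed.

Lemma grid_point_norm_le (t : nat) : 0 <= M -> (t < grid_size)%N -> `|grid_point t| <= M.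
Proof.
move=> M0; rewrite ltnS => tM.
have : (t%:R : R) <= (M + M) / del.
  apply: le_trans (_ : (grid_index M)%:R <= _); first by rewrite ler_nat.
  by rewrite truncn_le divr_ge0 ?addr_ge0 // ltW.
rewrite ler_pdivlMr // ler_norml /grid_point => tdel.
by apply/andP; split; [rewrite lerDl mulr_ge0 // ltW | lra].
Qed.

End Grid.

Section LinearRelation.
Context {R : realType} {d : measure_display} {Omega : measurableType d}
  (Pr : probability Omega R) {I : finType} (Z : I -> Omega -> R).
Hypothesis mZ : forall i, measurable_fun setT (Z i).
Hypothesis Zindep : forall B : I -> set R, (forall i, measurable (B i)) ->
  Pr (\big[setI/setT]_i (Z i @^-1` B i)) = (\prod_i Pr (Z i @^-1` B i))%E.
Hypothesis Znull : forall i s, Pr (Z i @^-1` [set s]) = 0%E.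

Lemma measurable_lincomb_eq0 (c : I -> R) :
  measurable [set w | \sum_i c i * Z i w = 0].
Proof.
have mf : measurable_fun setT (fun w => \sum_i c i * Z i w).
  by apply: measurable_sum => i; exact: measurable_funM (measurable_cst _) (mZ i).
exact: measurable_preimage mf (measurable_set1 0).
Qed.

Lemma probability_some_large_small {eps : R} : 0 < eps -> exists2 M : R, 0 <= M &
  (Pr (\big[setU/set0]_i (Z i @^-1` [set x | (M < `|x|)%R])) <= (#|I|%:R * eps)%:E)%E.
Proof.
move=> e0; have /choice [Mf HM] := fun i => probability_norm_gt_small Pr (mZ i) e0.
have Mf0 i : 0 <= Mf i by case: (HM i).
exists (\sum_i Mf i); first exact: sumr_ge0.
have mT i : measurable (Z i @^-1` [set x | (\sum_i Mf i < `|x|)%R]).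
  by apply: measurable_preimage (mZ i) _; exact: measurable_norm_gt.
apply: le_trans (measure_bigsetU_le Pr (fun i _ => mT i)) _.
apply: le_trans (_ : (\sum_(i : I) eps%:E <= _)%E).
  apply: lee_sum => i _; apply: le_trans (proj2 (HM i)).
  apply: le_measure; rewrite ?inE; [exact: mT | |].
    by apply: measurable_preimage (mZ i) _; exact: measurable_norm_gt.
  by apply: preimage_subset => x /=; apply: le_lt_trans; rewrite (bigD1 i) //= lerDl sumr_ge0.
by rewrite sumEFin lee_fin sumr_const mulr_natl.
Qed.

Variable x0 : I.

Section Rectangles.
Context {m : nat} (cell : 'I_m -> set R) (J : {ffun I -> 'I_m} -> set R).

Definition grid_rectangle (cc : {ffun I -> 'I_m}) : set Omega :=
  \big[setI/setT]_j Z j @^-1` (if j == x0 then J cc else cell (cc j)).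

Lemma measurable_grid_rectangle cc : (forall t, measurable (cell t)) ->
  measurable (J cc) -> measurable (grid_rectangle cc).
Proof.
move=> mcell mJ; apply: bigsetI_measurable => j _.
by apply: measurable_preimage (mZ j) _; case: ifP.
Qed.

Lemma grid_rectangles_small (t0 : 'I_m) (eps : R) :
  (forall t, measurable (cell t)) -> trivIset setT cell ->
  (forall cc, measurable (J cc)) -> 0 <= eps ->
  (forall cc, (Pr (Z x0 @^-1` J cc) <= eps%:E)%E) ->
  (Pr (\big[setU/set0]_(cc in family (fun j t => (j != x0) || (t == t0)))
       grid_rectangle cc) <= eps%:E)%E.
Proof.
move=> mcell tri_cell mJ eps0 J_small.
pose Q (j : I) (t : 'I_m) := (j != x0) || (t == t0).
pose B cc j := if j == x0 then J cc else cell (cc j).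
have mB cc j : measurable (Z j @^-1` B cc j).
  by apply: measurable_preimage (mZ j) _; rewrite /B; case: ifP.
pose f j t := if j == x0 then 1 else fine (Pr (Z j @^-1` cell t)).
have rect_eq cc : Pr (grid_rectangle cc) = (\prod_j fine (Pr (Z j @^-1` B cc j)))%:E.
  rewrite /grid_rectangle Zindep => [|j]; last by rewrite /B; case: ifP.
  by rewrite -prodEFin; apply: eq_bigr => j _; rewrite -(probability_fineK Pr (mB cc j)).
have rect_le cc : fine (Pr (grid_rectangle cc)) <= eps * \prod_j f j (cc j).
  rewrite rect_eq /= (bigD1 x0) //= [X in _ <= _ * X](bigD1 x0) //= {1}/f eqxx mul1r.
  rewrite [X in _ <= _ * X](eq_bigr (fun j => fine (Pr (Z j @^-1` B cc j)))); last first.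
    by move=> j /negbTE hj; rewrite /f /B hj.
  apply: ler_wpM2r.
    by apply: prodr_ge0 => j _; case/andP: (probability_fine_itv Pr (mB cc j)).
  by rewrite -lee_fin -(probability_fineK Pr (mB cc x0)) /B eqxx.
have mrect cc : measurable (grid_rectangle cc) by exact: measurable_grid_rectangle.
apply: le_trans (measure_bigsetU_le Pr (fun cc _ => mrect cc)) _.
rewrite (eq_bigr _ (fun cc _ => probability_fineK Pr (mrect cc))) sumEFin lee_fin.
apply: le_trans (ler_sum _ (fun cc _ => rect_le cc)) _.
rewrite -mulr_sumr -bigA_distr_big_dep ler_piMr //.
apply: prodr_ile1 => j _; case: (eqVneq j x0) => [->|hj].
  by rewrite (big_pred1 t0) // /f eqxx ler01 lexx.
rewrite /= /f (negbTE hj).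
rewrite sumr_ge0 => [/=|t _]; last exact/fine_ge0/measure_ge0.
apply: (probability_trivIset_sum_le1 Pr (fun t => Z j @^-1` cell t)).
  by move=> t; exact: measurable_preimage (mZ j) (mcell t).
move=> t t' _ _ [w [/= ct ct']].
by apply: tri_cell => //; exists (Z j w).
Qed.

End Rectangles.

Variable c : I -> R.
Hypothesis cx0 : c x0 = 1.

(* The value of the coordinate [x0] forced by the relation when every other
   coordinate sits at its grid point. *)
Definition grid_offset (M del : R) {m} (cc : {ffun I -> 'I_m}) : R :=
  - \sum_(j | j != x0) c j * grid_point M del (cc j).

Lemma grid_offset_norm_le {M del : R} (cc : {ffun I -> 'I_(grid_size M del)}) :
  0 < del -> 0 <= M -> `|grid_offset M del cc| <= (\sum_i `|c i|) * M.
Proof.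
move=> del0 M0; rewrite normrN; apply: le_trans (ler_norm_sum _ _ _) _.
apply: le_trans (_ : \sum_(j | j != x0) `|c j| * M <= _).
  by apply: ler_sum => j _; rewrite normrM ler_wpM2l ?grid_point_norm_le.
by rewrite -mulr_suml ler_wpM2r // [leRHS](bigD1 x0) //= lerDr.
Qed.

(* On a zero of the linear form, once every other coordinate is located in its
   grid cell, the coordinate [x0] is pinned down up to [del * \sum_i `|c i|]. *)
Lemma lincomb_eq0_grid_cover {M del : R} {w : Omega} : 0 < del ->
  (forall j, `|Z j w| <= M) -> \sum_i c i * Z i w = 0 ->
  exists2 cc : {ffun I -> 'I_(grid_size M del)},
    cc \in family (fun j t => (j != x0) || (t == ord0)) &
    grid_rectangle (grid_cell M del)
      (fun cc => [set` `[grid_offset M del cc - (\sum_i `|c i|) * del,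
                         grid_offset M del cc + (\sum_i `|c i|) * del]]) cc w.
Proof.
move=> del0 ZM Ew.
pose cc : {ffun I -> 'I_(grid_size M del)} :=
  [ffun j => if j == x0 then ord0 else inord (grid_index M del (Z j w))].
have cell_cc j : j != x0 -> grid_cell M del (cc j) (Z j w).
  move=> /negbTE hj; rewrite ffunE hj inordK ?grid_index_lt //.
  by apply: grid_cell_index; have := ZM j; rewrite ler_norml => /andP [].
have near_cc j : j != x0 -> `|grid_point M del (cc j) - Z j w| <= del.
  move=> /cell_cc; rewrite /grid_cell /grid_point /= in_itv /= -natr1 mulrDl mul1r.
  by move=> /andP [h1 h2]; rewrite ler_distlC; apply/andP; split; lra.
exists cc.
  by apply/familyP => j; rewrite ffunE; case: eqP.
rewrite /grid_rectangle; apply: (big_ind (fun X : set Omega => X w)) => [//|X Y ? ?|j _].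
  by split.
case: eqP => [->|/eqP hj]; last exact: cell_cc.
have offset_diff : Z x0 w - grid_offset M del cc =
    \sum_(i | i != x0) c i * (grid_point M del (cc i) - Z i w).
  move: Ew; rewrite (bigD1 x0) //= cx0 mul1r => /eqP; rewrite addr_eq0 => /eqP ->.
  by rewrite /grid_offset opprK addrC -sumrB; apply: eq_bigr => i _; rewrite mulrBr.
rewrite /= in_itv /= -ler_distl offset_diff.
apply: le_trans (ler_norm_sum _ _ _) _.
apply: le_trans (_ : \sum_(i | i != x0) `|c i| * del <= _).
  by apply: ler_sum => i hi; rewrite normrM ler_wpM2l // near_cc.
by rewrite -mulr_suml ler_pM2r // [leRHS](bigD1 x0) //= lerDr.
Qed.

(* Up to the event that some coordinate exceeds [M], a zero of the form lies in
   a union of grid rectangles whose [x0]-side has length [2 S del <= eta]; by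
   independence that union has probability at most [eps]. *)
Lemma lincomb_eq0_null : Pr [set w | \sum_i c i * Z i w = 0] = 0%E.
Proof.
set E := [set w | _]; have mE : measurable E := measurable_lincomb_eq0 c.
apply: (probability_eq0_of_small Pr (#|I|%:R + 1)) => [|eps e0]; first exact: ltr_wpDl.
have [M M0 tails_small] := probability_some_large_small e0.
pose U1 := \big[setU/set0]_i (Z i @^-1` [set x | (M < `|x|)%R]).
set S := \sum_i `|c i|.
have S1 : 1 <= S by rewrite /S (bigD1 x0) //= cx0 normr1 lerDl sumr_ge0.
have [eta eta0 Heta] := probability_short_intervals_small Pr _ _
  (- (S * (M + 1))) (S * (M + 1)) (mZ x0) e0 (Znull x0).
pose del := Num.min 1 eta / (2 * S).
have S0 : 0 < S := lt_le_trans ltr01 S1.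
have del0 : 0 < del by apply: divr_gt0; rewrite ?lt_min ?ltr01 ?eta0 ?mulr_gt0.
have Sdel : 2 * S * del = Num.min 1 eta by rewrite /del mulrC divfK // gt_eqF ?mulr_gt0.
have Sdel_eta : 2 * S * del <= eta by rewrite Sdel ge_min lexx orbT.
have Sdel_1 : 2 * S * del <= 1 by rewrite Sdel ge_min lexx.
pose J (cc : {ffun I -> 'I_(grid_size M del)}) :=
  [set` `[grid_offset M del cc - S * del, grid_offset M del cc + S * del]].
pose U2 := \big[setU/set0]_(cc in family (fun j t => (j != x0) || (t == ord0)))
  grid_rectangle (grid_cell M del) J cc.
have U2_small : (Pr U2 <= eps%:E)%E.
  apply: grid_rectangles_small (ltW e0) _ => [t||cc|cc].
  - exact: measurable_itv.
  - exact: grid_cell_trivIset.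
  - exact: measurable_itv.
  apply: le_trans (Heta (grid_offset M del cc - S * del) _); last first.
    have := grid_offset_norm_le cc del0 M0; rewrite -/S ler_norml => /andP [? ?].
    have : 0 <= S * del by rewrite mulr_ge0 // ltW.
    by move=> ?; apply/andP; split; nra.
  apply: (le_probability_preimage Pr (mZ x0)); [exact: measurable_itv.. |].
  by apply: subset_itvScc; rewrite bnd_simp; lra.
have E_cover : E `<=` U1 `|` U2.
  move=> w Ew; have [[i Mi]|bounded] := pselect (exists i, M < `|Z i w|).
    by left; rewrite /U1 -bigcup_seq; exists i; rewrite //= mem_index_enum.
  right; have ZM j : `|Z j w| <= M.
    by rewrite leNgt; apply/negP => Mj; apply: bounded; exists j.
  have [cc ccQ rect] := lincomb_eq0_grid_cover del0 ZM Ew.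
  by rewrite /U2 -bigcup_seq_cond; exists cc; rewrite //= mem_index_enum.
have mU1 : measurable U1.
  apply: bigsetU_measurable => i _.
  by apply: measurable_preimage (mZ i) _; exact: measurable_norm_gt.
have mU2 : measurable U2.
  apply: bigsetU_measurable => cc _.
  by apply: measurable_grid_rectangle => *; exact: measurable_itv.
apply: le_trans (le_measure _ _ _ E_cover) _; rewrite ?inE //; first exact: measurableU.
apply: le_trans (measureU2 _ mU1 mU2) _.
by rewrite mulrDl mul1r EFinD leeD.
Qed.

End LinearRelation.

Lemma ln_div_gain {R : realType} (I x y : R) : 0 < I -> 0 <= x -> 0 <= y ->
  (y - x) / (I + y) <= ln (1 + y / I) - ln (1 + x / I).
Proof.
move=> I0 x0 y0.
have u0 : 0 < 1 + y / I by rewrite ltr_wpDr ?divr_ge0 // ltW.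
have v0 : 0 < 1 + x / I by rewrite ltr_wpDr ?divr_ge0 // ltW.
have -> : (y - x) / (I + y) = 1 - (1 + x / I) / (1 + y / I).
  by field; rewrite !gt_eqF // ltr_wpDr.
have : -1 < (1 + x / I) / (1 + y / I) - 1 by have := divr_gt0 v0 u0; lra.
by move=> /le_ln1Dx; rewrite addrC subrK ln_div ?posrE //; lra.
Qed.

Lemma shift_gain_pos {R : realType} {ba bb ga gb Wa Wb e : R} :
  0 < ba -> 0 < bb -> 0 < ga -> 0 < gb -> 0 < Wb -> 0 < e -> 0 < Wa - ga * e ->
  e * (ga * gb * (ba + bb)) < bb * gb * Wa - ba * ga * Wb ->
  0 < bb * (gb * e / (Wb + gb * e)) - ba * (ga * e / (Wa - ga * e)).
Proof.
move=> ba0 bb0 ga0 gb0 Wb0 e0 Wa0 HD.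
have Wbe0 : 0 < Wb + gb * e by rewrite addr_gt0 // mulr_gt0.
have -> : bb * (gb * e / (Wb + gb * e)) - ba * (ga * e / (Wa - ga * e)) =
  e * (bb * gb * Wa - ba * ga * Wb - e * (ga * gb * (ba + bb))) /
    ((Wb + gb * e) * (Wa - ga * e)) by field; rewrite !gt_eqF.
by rewrite divr_gt0 ?mulr_gt0 // subr_gt0.
Qed.

Section NashMarginals.
Context {R : realType} {K A : nat} (b s2 : 'I_A -> R) (Pmax : 'I_K -> R)
  (g : 'I_K -> 'I_A -> R).
Hypotheses (b_gt0 : forall a, 0 < b a) (s2_gt0 : forall a, 0 < s2 a)
  (g_gt0 : forall k a, 0 < g k a).

Definition received_power (p : profile R K A) (a : 'I_A) : R :=
  s2 a + \sum_l g l a * p l a.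

Definition interference (p : profile R K A) (k : 'I_K) (a : 'I_A) : R :=
  s2 a + \sum_(l | l != k) g l a * p l a.

Lemma received_powerE p k a : received_power p a = interference p k a + g k a * p k a.
Proof. by rewrite /received_power /interference (bigD1 k) //=; ring. Qed.

Lemma payoff_deviate p k qk : payoff b s2 g k (deviate p k qk) =
  \sum_a b a * ln (1 + g k a * qk a / interference p k a).
Proof.
apply: eq_bigr => a _; rewrite /deviate eqxx /interference.
by congr (_ * ln (1 + _ / (_ + _))); apply: eq_bigr => l /negbTE ->.
Qed.

Lemma payoff_interference p k : payoff b s2 g k p =
  \sum_a b a * ln (1 + g k a * p k a / interference p k a).
Proof.
rewrite -payoff_deviate; apply: eq_bigr => a _; rewrite /deviate eqxx.
by congr (_ * ln (1 + _ / (_ + _))); apply: eq_bigr => l /negbTE ->.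
Qed.

Lemma noise_power_gt0 {p} a (P : pred 'I_K) : in_Delta Pmax p ->
  0 < s2 a + \sum_(l | P l) g l a * p l a.
Proof.
move=> inD; apply: lt_le_trans (s2_gt0 a) _; rewrite lerDl.
apply: sumr_ge0 => l _; apply: mulr_ge0 (ltW (g_gt0 l a)) _.
by case: (inD l) => + _; apply.
Qed.

Definition shift_power (pk : 'I_A -> R) (al be : 'I_A) (e : R) : 'I_A -> R :=
  fun a => pk a + (if a == be then e else 0) - (if a == al then e else 0).

Lemma shift_power_in_Delta {k pk al be e} : al != be -> 0 <= e <= pk al ->
  in_Delta_k Pmax k pk -> in_Delta_k Pmax k (shift_power pk al be e).
Proof.
move=> neq /andP [e0 e_le] [pk0 sum_pk]; split => [a|].
  rewrite /shift_power; case: (eqVneq a al) => [->|hal].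
    by rewrite (negbTE neq) addr0 subr_ge0.
  by rewrite subr0; case: eqP => _; rewrite ?addr0 // addr_ge0.
rewrite /shift_power sumrB big_split /= -!big_mkcond /= !big_pred1_eq sum_pk.
by rewrite addrK.
Qed.

Lemma payoff_shift_ge {p k} {al be : 'I_A} {e} : in_Delta Pmax p -> al != be ->
  0 < e -> e <= p k al ->
  b be * (g k be * e / (received_power p be + g k be * e)) -
    b al * (g k al * e / (received_power p al - g k al * e)) <=
  payoff b s2 g k (deviate p k (shift_power (p k) al be e)) - payoff b s2 g k p.
Proof.
move=> inD neq e0 e_le; have p0 l a : 0 <= p l a by case: (inD l) => + _; apply.
have I0 a : 0 < interference p k a := noise_power_gt0 a _ inD.
have gp0 a q : 0 <= q -> 0 <= g k a * q := mulr_ge0 (ltW (g_gt0 k a)).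
rewrite payoff_deviate payoff_interference -sumrB.
rewrite (bigD1 al) //= (bigD1 be) 1?eq_sym //= big1 ?addr0 => [|a /andP [hal hbe]]; last first.
  by rewrite /shift_power (negbTE hal) (negbTE hbe) addr0 subr0 subrr.
rewrite /shift_power eqxx (negbTE neq) eq_sym (negbTE neq) eqxx addr0 subr0 -!mulrBr.
rewrite addrC -mulrN; apply: lerD; apply: ler_wpM2l; try exact: ltW.
  rewrite (_ : g k be * e / _ = (g k be * (p k be + e) - g k be * p k be) /
      (interference p k be + g k be * (p k be + e))).
    by apply: ln_div_gain; rewrite ?I0 ?gp0 ?addr_ge0 ?p0 ?(ltW e0).
  by rewrite (received_powerE _ k); congr (_ / _); ring.
rewrite (_ : - (g k al * e / _) = (g k al * (p k al - e) - g k al * p k al) /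
    (interference p k al + g k al * (p k al - e))).
  by apply: ln_div_gain; rewrite ?I0 ?gp0 ?subr_ge0 ?p0.
by rewrite (received_powerE _ k) -mulNr; congr (_ / _); ring.
Qed.

(* First-order optimality: otherwise moving a little power from [al] to [be]
   would raise the payoff of user [k]. *)
Lemma Nash_marginal_le p k (al be : 'I_A) :
  Nash_equilibrium b s2 Pmax g p -> 0 < p k al ->
  b be * g k be / received_power p be <= b al * g k al / received_power p al.
Proof.
move=> [inD NE] pal; have W0 a : 0 < received_power p a := noise_power_gt0 a _ inD.
case: (eqVneq al be) => [<-|neq]; first exact: lexx.
rewrite leNgt; apply/negP => Hlt.
pose D := b be * g k be * received_power p al - b al * g k al * received_power p be.
have D0 : 0 < D.
  move: Hlt; rewrite ltr_pdivrMr // mulrAC ltr_pdivlMr // subr_gt0.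
  by rewrite /D mulrAC.
pose C := g k al * g k be * (b al + b be).
have C0 : 0 < C by rewrite !mulr_gt0 // addr_gt0.
pose e := Num.min (p k al) (D / (2 * C)).
have e0 : 0 < e by rewrite lt_min pal divr_gt0 // mulr_gt0.
have e_le : e <= p k al by rewrite ge_min lexx.
have eC : e * C < D.
  have : e <= D / (2 * C) by rewrite ge_min lexx orbT.
  rewrite -(ler_pM2r C0) (_ : D / (2 * C) * C = D / 2); first lra.
  by field; rewrite gt_eqF.
have Wal_e : 0 < received_power p al - g k al * e.
  rewrite (received_powerE _ k) -addrA -mulrBr ltr_wpDr //.
    by rewrite mulr_ge0 ?subr_ge0 // ltW.
  exact: (noise_power_gt0 al _ inD).
have := NE k _ (shift_power_in_Delta neq (introT andP (conj (ltW e0) e_le)) (inD k)).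
apply/negP; rewrite -ltNge -subr_gt0.
apply: lt_le_trans (payoff_shift_ge inD neq e0 e_le).
exact: shift_gain_pos (b_gt0 al) (b_gt0 be) (g_gt0 k al) (g_gt0 k be) (W0 be) e0 Wal_e eC.
Qed.

Lemma Nash_cycle_gains p {n} {ks : 'I_n.+1 -> 'I_K} {vs : 'I_n.+1 -> 'I_A} :
  Nash_equilibrium b s2 Pmax g p ->
  (forall i, 0 < p (ks i) (vs i) /\ 0 < p (ks i) (vs (ordS i))) ->
  \prod_i g (ks i) (vs i) = \prod_i g (ks i) (vs (ordS i)).
Proof.
move=> NE supp; pose r a := b a / received_power p a.
have r_gt0 a : 0 < r a by case: NE => inD _; rewrite divr_gt0 ?noise_power_gt0.
have step i : g (ks i) (vs i) * r (vs i) = g (ks i) (vs (ordS i)) * r (vs (ordS i)).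
  have [s1 s2'] := supp i; rewrite /r !mulrA ![g _ _ * b _]mulrC.
  by apply/le_anti; rewrite !Nash_marginal_le.
have r_cycle : \prod_i r (vs (ordS i)) = \prod_i r (vs i).
  by rewrite [RHS](reindex_inj (@ordS_inj _)).
have : \prod_i (g (ks i) (vs i) * r (vs i)) =
    \prod_i (g (ks i) (vs (ordS i)) * r (vs (ordS i))) by apply: eq_bigr => i _.
rewrite big_split [RHS]big_split /= r_cycle.
by apply: mulIf; rewrite gt_eqF // prodr_gt0.
Qed.

End NashMarginals.

Lemma ordS_inord n t : (t < n)%N -> ordS (inord t : 'I_n.+1) = inord t.+1.
Proof.
by move=> tn; apply: val_inj => /=; rewrite !inordK ?modn_small // ltnS ltnW.
Qed.

Lemma ordS_invariant_const {T : Type} {n} (f : 'I_n.+1 -> T) :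
  (forall i, f (ordS i) = f i) -> forall i, f i = f ord0.
Proof.
move=> fS i; rewrite -(inord_val i); have : (i <= n)%N by rewrite -ltnS.
elim: (nat_of_ord i) => [|t IH] tn; first by congr f; apply: val_inj; rewrite /= inordK.
by rewrite -ordS_inord // fS IH // ltnW.
Qed.

Section RepresentingMultigraph.
Context {R : realType} {K A : nat} (p : 'I_K -> 'I_A -> R) (h : 'I_K -> 'I_A).

Lemma repr_edge_support e u v : is_hub_choice p h -> repr_edge p h e ->
  repr_joins h e u v -> 0 < p e.1 u /\ 0 < p e.1 v.
Proof.
move=> hub /andP [supp_e _] /orP [] /andP [/eqP -> /eqP ->]; first by split; [exact: hub|].
by split; [|exact: hub].
Qed.

(* If a single user owned every edge of the cycle, the non-hub endpoints of
   these edges would be pairwise distinct and hence exhaust the vertices of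
   the cycle, leaving no room for the hub that each of the edges touches. *)
Lemma cycle_owner_change n (es : 'I_n.+1 -> 'I_K * 'I_A) (vs : 'I_n.+1 -> 'I_A) :
  injective es -> (forall i, repr_edge p h (es i)) ->
  (forall i, repr_joins h (es i) (vs i) (vs (ordS i))) ->
  exists i, (es i).1 != (es (ordS i)).1.
Proof.
move=> es_inj edge joins; apply: contrapT => no_change.
have same i : (es (ordS i)).1 = (es i).1.
  by apply/eqP; apply: contraT => ne; case: no_change; exists i; rewrite eq_sym.
pose k := (es ord0).1.
have es_k i : (es i).1 = k := ordS_invariant_const (fun i => (es i).1) same i.
have not_hub i : (es i).2 != h k by have /andP [_] := edge i; rewrite es_k.
pose j i := if vs i == h k then ordS i else i.
have vs_j i : vs (j i) = (es i).2.
  have := joins i; rewrite /repr_joins es_k /j.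
  case: (eqVneq (vs i) (h k)) => [hub_i|_] /orP [] /andP [/eqP h1 /eqP h2] //.
  by move: (not_hub i); rewrite -h1 hub_i eqxx.
have j_inj : injective j.
  move=> i i' e; apply: es_inj; move: (es_k i) (es_k i') (vs_j i) (vs_j i').
  by rewrite e; case: (es i) => ? ?; case: (es i') => ? ? /= -> -> <- <-.
have [jinv jK Kj] := injF_bij j_inj.
have [m vs_m] : exists m, vs m = h k.
  by case/orP: (joins ord0) => /andP [/eqP h1 /eqP h2]; [exists ord0 | exists (ordS ord0)].
by move: (not_hub (jinv m)); rewrite -vs_j Kj vs_m eqxx.
Qed.

End RepresentingMultigraph.

Lemma Nash_cycle_relation {R : realType} {K A : nat} {b s2 : 'I_A -> R}
  {Pmax : 'I_K -> R} {g : 'I_K -> 'I_A -> R} {p : 'I_K -> 'I_A -> R} {h : 'I_K -> 'I_A} :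
  (forall a, 0 < b a) -> (forall a, 0 < s2 a) -> (forall k a, 0 < g k a) ->
  Nash_equilibrium b s2 Pmax g p -> is_hub_choice p h -> has_cycle p h ->
  exists n (ks : 'I_n.+1 -> 'I_K) (vs : 'I_n.+1 -> 'I_A),
    [/\ (n < A)%N, injective vs, exists i, ks i != ks (ordS i) &
     \prod_i g (ks i) (vs i) = \prod_i g (ks i) (vs (ordS i))].
Proof.
move=> b_gt0 s2_gt0 g_gt0 NE hub [n [es [vs [es_inj [vs_inj [edge joins]]]]]].
exists n, (fun i => (es i).1), vs; split => //.
- by have := leq_card vs vs_inj; rewrite !card_ord.
- exact: cycle_owner_change es_inj edge joins.
apply: (Nash_cycle_gains _ _ _ _ b_gt0 s2_gt0 g_gt0 p NE) => i.
exact: repr_edge_support hub (edge i) (joins i).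
Qed.

Lemma ln_prod {R : realType} {I : Type} (r : seq I) (f : I -> R) :
  (forall i, 0 < f i) -> ln (\prod_(i <- r) f i) = \sum_(i <- r) ln (f i).
Proof.
move=> f_gt0; elim: r => [|x r IH]; first by rewrite !big_nil ln1.
by rewrite !big_cons lnM ?IH // posrE // prodr_gt0.
Qed.

Lemma sum_indicator_mul {R : pzSemiRingType} {T : finType} (a : T) (F : T -> R) :
  \sum_x (x == a)%:R * F x = F a.
Proof.
by rewrite (bigD1 a) //= eqxx mul1r big1 ?addr0 // => x /negbTE ->; rewrite mul0r.
Qed.

(* Taking logarithms turns the multiplicative relation into a linear relation
   among the independent, nonatomic variables [ln g], with coefficient [1] on
   the gain at the node where the owner changes. *)
Lemma gain_cycle_relation_negligible {R : realType} {d : measure_display}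
  {Omega : measurableType d} (Pr : probability Omega R) {K A : nat}
  (g : 'I_K -> 'I_A -> Omega -> R)
  (g_meas : forall k a, measurable_fun setT (g k a))
  (g_gt0 : forall k a w, 0 < g k a w)
  (g_indep : forall B : 'I_K * 'I_A -> set R, (forall i, measurable (B i)) ->
     Pr (\big[setI/setT]_(i : 'I_K * 'I_A) (g i.1 i.2 @^-1` B i)) =
     (\prod_(i : 'I_K * 'I_A) Pr (g i.1 i.2 @^-1` B i))%E)
  (g_null : forall k a (x : R), Pr (g k a @^-1` [set x]) = 0%E)
  {n} {ks : 'I_n.+1 -> 'I_K} {vs : 'I_n.+1 -> 'I_A} :
  injective vs -> (exists i, ks i != ks (ordS i)) ->
  Pr.-negligible [set w | \prod_i g (ks i) (vs i) w = \prod_i g (ks i) (vs (ordS i)) w].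
Proof.
move=> vs_inj [i0 change].
pose Z (x : 'I_K * 'I_A) w := ln (g x.1 x.2 w).
have mZ x : measurable_fun setT (Z x) := measurableT_comp (@measurable_ln R) (g_meas _ _).
have Zindep B : (forall x, measurable (B x)) ->
    Pr (\big[setI/setT]_x (Z x @^-1` B x)) = (\prod_x Pr (Z x @^-1` B x))%E.
  move=> mB; have mlnB x : measurable ((@ln R) @^-1` B x).
    by rewrite -[_ @^-1` _]setTI; exact: (@measurable_ln R).
  exact: g_indep (fun x => (@ln R) @^-1` B x) mlnB.
have Znull x s : Pr (Z x @^-1` [set s]) = 0%E.
  rewrite -(g_null x.1 x.2 (expR s)); congr (Pr _); apply/seteqP; split => w /=.
    by move=> <-; rewrite /Z lnK // posrE.
  by rewrite /Z => ->; rewrite expRK.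
pose c x : R := \sum_i ((x == (ks i, vs i))%:R - (x == (ks i, vs (ordS i)))%:R).
have c1 : c (ks (ordS i0), vs (ordS i0)) = 1.
  rewrite /c (eq_bigr (fun i => (i == ordS i0)%:R)) => [|i _].
    by rewrite (bigD1 (ordS i0)) //= eqxx big1 ?addr0 // => i /negbTE ->.
  have -> : ((ks (ordS i0), vs (ordS i0)) == (ks i, vs i)) = (i == ordS i0).
    by apply/eqP/eqP => [[_ /vs_inj ->]|->].
  suff /negbTE -> : (ks (ordS i0), vs (ordS i0)) != (ks i, vs (ordS i)) by rewrite subr0.
  apply/negP => /eqP [ks_eq /vs_inj /ordS_inj i_eq].
  by move: change; rewrite ks_eq i_eq eqxx.
exists [set w | \sum_x c x * Z x w = 0]; split.
- exact: measurable_lincomb_eq0.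
- exact: (lincomb_eq0_null Pr Z mZ Zindep Znull _ c c1).
move=> w /= rel.
have -> : \sum_x c x * Z x w = \sum_i (Z (ks i, vs i) w - Z (ks i, vs (ordS i)) w).
  rewrite /c; under eq_bigr do rewrite mulr_suml.
  rewrite exchange_big /=; apply: eq_bigr => i _.
  by under eq_bigr do rewrite mulrBl; rewrite sumrB !sum_indicator_mul.
by rewrite sumrB /Z -!ln_prod ?rel ?subrr // => i; exact: g_gt0.
Qed.

Theorem lemma1 (R : realType) (K A : nat) (HK : (0 < K)%N) (HA : (0 < A)%N)
  (b s2 : 'I_A -> R) (Pmax : 'I_K -> R)
  (Hb : forall a, 0 < b a) (Hs2 : forall a, 0 < s2 a) (HP : forall k, 0 < Pmax k)
  (d : measure_display) (Omega : measurableType d) (Pr : probability Omega R)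
  (g : 'I_K -> 'I_A -> Omega -> R)
  (Hgmeas : forall k a, measurable_fun setT (g k a))
  (Hgpos : forall k a w, 0 < g k a w)
  (Hgindep : forall B : 'I_K * 'I_A -> set R, (forall i, measurable (B i)) ->
     Pr (\big[setI/setT]_(i : 'I_K * 'I_A) (g i.1 i.2 @^-1` B i)) =
     (\prod_(i : 'I_K * 'I_A) Pr (g i.1 i.2 @^-1` B i))%E)
  (Hgnonatomic : forall k a (x : R), Pr (g k a @^-1` [set x]) = 0%E) :
  {ae Pr, forall w, forall p : 'I_K -> 'I_A -> R,
     Nash_equilibrium b s2 Pmax (fun k a => g k a w) p ->
     forall h : 'I_K -> 'I_A, is_hub_choice p h -> is_forest p h}.
Proof.
(* Cycles have fewer than [A] nodes, so finitely many cycle shapes suffice. *)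
pose generic w := forall (n : 'I_A)
    (ks : {ffun 'I_n.+1 -> 'I_K}) (vs : {ffun 'I_n.+1 -> 'I_A}),
  injective vs -> (exists i, ks i != ks (ordS i)) ->
  \prod_i g (ks i) (vs i) w != \prod_i g (ks i) (vs (ordS i)) w.
have ae_generic : \forall w \ae Pr, generic w.
  apply: filter_forall => n; apply: filter_forall => ks; apply: filter_forall => vs.
  have [[vs_inj change]|degenerate] := pselect (injective vs /\ exists i, ks i != ks (ordS i)).
    have [N [mN N0 relN]] := gain_cycle_relation_negligible Pr g Hgmeas Hgpos Hgindep
      Hgnonatomic vs_inj change.
    exists N; split => // w /= not_generic; apply: relN => /=.
    by apply/eqP; apply: contrapT => ne; apply: not_generic => _ _; exact/negP.
  by apply: aeW => w vs_inj change; case: degenerate.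
apply: filterS ae_generic => w gen_w p NE h hub cyc.
have [n [ks [vs [nA vs_inj change rel]]]] :=
  Nash_cycle_relation Hb Hs2 (fun k a => Hgpos k a w) NE hub cyc.
have vs_inj' : injective [ffun i => vs i] by move=> i j; rewrite !ffunE; exact: vs_inj.
have change' : exists i, [ffun i => ks i] i != [ffun i => ks i] (ordS i).
  by case: change => i ?; exists i; rewrite !ffunE.
case/negP: (gen_w (Ordinal nA) _ _ vs_inj' change').
apply/eqP; under eq_bigr do rewrite !ffunE.
by under [RHS]eq_bigr do rewrite !ffunE.
Qed.
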